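(* Let $\sigma$ be a relational vocabulary and $\sigma^*$ its extension by relation symbols $C_n$ of arity $n$ for each positive integer $n$. For a $\sigma$-structure $\mathcal{A}$, let $C(\mathcal{A})$ be the $\sigma^*$-structure extending $\mathcal{A}$ with $C_n^{C(\mathcal{A})}(a_1,\dots,a_n)$ iff $\mathcal{A}\models\mathrm{clique}_n(a_1,\dots,a_n)$. For $\sigma$-structures $\mathcal{A}$ and $\mathcal{B}$ the following are equivalent: (1) Duplicator has a winning strategy for the clique guarded bisimulation game between $\mathcal{A}$ and $\mathcal{B}$; (2) Duplicator has a winning strategy for the atom guarded bisimulation game between $C(\mathcal{A})$ and $C(\mathcal{B})$. Moreover, the equivalence remains true if both games are restricted to a fixed finite number of rounds, or both restricted to guarded sets of width at most $k$ ($k$-guarded sets), or if both are replaced by the corresponding simulation games (from $\mathcal{A}$ to $\mathcal{B}$, respectively from $C(\mathcal{A})$ to $C(\mathcal{B})$).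
   Context: The Gaifman graph of a structure has its elements as vertices, distinct elements adjacent iff they co-occur in a tuple of some relation. For each $n\ge1$, $\mathrm{clique}_n$ is a positive existential formula such that $\mathcal{A}\models\mathrm{clique}_n(a_1,\dots,a_n)$ iff $a_1,\dots,a_n$ form a clique in the Gaifman graph of $\mathcal{A}$. A set $X$ is clique guarded (resp. atom guarded) if it is contained in the set of entries of a finite tuple $\vec a$ satisfying some $\mathrm{clique}_n$ (resp. some atomic formula in which all of its variables occur); it is $k$-guarded if moreover $\vec a$ can be taken of length at most $k$. The $\mathfrak{g}$-guarded bisimulation game between $\mathcal{A}$ and $\mathcal{B}$: $X_0=Y_0=\varnothing$, $\varphi_0=\varnothing$; in round $n+1$ Spoiler either picks a $\mathfrak{g}$-guarded $X_{n+1}$ in $\mathcal{A}$ and Duplicator answers with a $\mathfrak{g}$-guarded $Y_{n+1}$ in $\mathcal{B}$ and a partial isomorphism $\varphi_{n+1}:X_{n+1}\to Y_{n+1}$ agreeing with $\varphi_n$ on $X_{n+1}\cap X_n$, or picks a $\mathfrak{g}$-guarded $Y_{n+1}$ in $\mathcal{B}$ and Duplicator answers with a $\mathfrak{g}$-guarded $X_{n+1}$ in $\mathcal{A}$ and a partial isomorphism $\varphi_{n+1}$ whose inverse agrees with $\varphi_n^{-1}$ on $Y_{n+1}\cap Y_n$. Duplicator wins if he can always respond. The simulation game from $\mathcal{A}$ to $\mathcal{B}$ is the variant where Spoiler only plays in $\mathcal{A}$ and Duplicator's maps $\varphi_{n+1}$ need only be partial homomorphisms (agreeing with $\varphi_n$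 on overlaps). *)

From Stdlib Require Import List Arith.
Import ListNotations.

Record vocab := Vocab { sym : Type; arity : sym -> nat }.

Record structure (V : vocab) := Structure {
  carrier :> Type;
  rel : sym V -> list carrier -> Prop;
  rel_arity : forall s t, rel s t -> length t = arity V s }.
Arguments rel {V} _ _ _.

Section Basics.
Context {V : vocab} (A : structure V).

Definition gaifman_adj (a b : A) : Prop :=
  a <> b /\ exists s t, rel A s t /\ In a t /\ In b t.

(** [a_1 .. a_n] form a clique in the Gaifman graph
    (semantics of clique_n(a_1,...,a_n)). *)
Definition is_clique (a : list A) : Prop :=
  forall x y, In x a -> In y a -> x = y \/ gaifman_adj x y.

Definition within (k : option nat) (n : nat) : Prop :=
  match k with None => True | Some k => n <= k end.

Definition clique_guarded (k : option nat) (X : A -> Prop) : Prop :=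
  exists a : list A, 1 <= length a /\ within k (length a) /\ is_clique a /\
    forall x, X x -> In x a.

(** [a] (the values of the variables x_1..x_n) satisfies an atomic formula
    in which all of the variables x_1..x_n occur: either R(x_{f 1},...,x_{f m})
    with f onto, i.e. the entries of [a] are exactly the entries of a tuple in
    some relation, or an equality atom x_1 = x_1 / x_1 = x_2. *)
Definition atom_sat (a : list A) : Prop :=
  (exists s t, rel A s t /\ forall x, In x a <-> In x t) \/
  (exists x, a = [x] \/ a = [x; x]).

Definition atom_guarded (k : option nat) (X : A -> Prop) : Prop :=
  exists a : list A, within k (length a) /\ atom_sat a /\
    forall x, X x -> In x a.
End Basics.

(** The extension sigma* and the structure C(A): [inr n] is C_{n+1}. *)
Definition vocab_star (V : vocab) : vocab :=
  Vocab (sym V + nat)%type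
        (fun s => match s with inl s => arity V s | inr n => S n end).

Definition rel_star {V : vocab} (A : structure V) (s : sym (vocab_star V))
  (t : list A) : Prop :=
  match s with
  | inl s => rel A s t
  | inr n => length t = S n /\ is_clique A t
  end.

Lemma rel_star_arity {V : vocab} (A : structure V) :
  forall s t, rel_star A s t -> length t = arity (vocab_star V) s.
Proof. intros [s|n] t H; simpl in *; [apply (rel_arity V A); exact H | apply H]. Qed.

Definition Cstr {V : vocab} (A : structure V) : structure (vocab_star V) :=
  Structure (vocab_star V) A (rel_star A) (rel_star_arity A).

(** Games.  A position is (the graph of) the current partial map phi_n. *)
Inductive game_kind := Bisim | Sim.

Section Game.
Context {V : vocab} (A B : structure V)
        (gA : (A -> Prop) -> Prop) (gB : (B -> Prop) -> Prop).

Definition partial_iso (X : A -> Prop) (Y : B -> Prop) (P : A -> B -> Prop) :=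
  (forall x y y', P x y -> P x y' -> y = y') /\
  (forall x x' y, P x y -> P x' y -> x = x') /\
  (forall x, X x <-> exists y, P x y) /\
  (forall y, Y y <-> exists x, P x y) /\
  (forall s t u, Forall2 P t u -> (rel A s t <-> rel B s u)).

Definition partial_hom (X : A -> Prop) (Y : B -> Prop) (P : A -> B -> Prop) :=
  (forall x y y', P x y -> P x y' -> y = y') /\
  (forall x, X x <-> exists y, P x y) /\
  (forall x y, P x y -> Y y) /\
  (forall s t u, Forall2 P t u -> rel A s t -> rel B s u).

Definition partial_map (kind : game_kind) :=
  match kind with Bisim => partial_iso | Sim => partial_hom end.

(** Spoiler plays X' in A: Duplicator answers Y', phi' agreeing with phi on X' ∩ X *)
Definition fwd_move (kind : game_kind) (win : (A -> B -> Prop) -> Prop)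
  (P : A -> B -> Prop) : Prop :=
  forall X', gA X' -> exists (Y' : B -> Prop) (P' : A -> B -> Prop),
    gB Y' /\ partial_map kind X' Y' P' /\
    (forall x y, X' x -> P x y -> P' x y) /\ win P'.

(** Spoiler plays Y' in B: Duplicator answers X', phi' whose inverse agrees
    with phi^{-1} on Y' ∩ Y *)
Definition bwd_move (win : (A -> B -> Prop) -> Prop) (P : A -> B -> Prop) : Prop :=
  forall Y', gB Y' -> exists (X' : A -> Prop) (P' : A -> B -> Prop),
    gA X' /\ partial_iso X' Y' P' /\
    (forall x y, Y' y -> P x y -> P' x y) /\ win P'.

Definition spoiler_moves (kind : game_kind) (win : (A -> B -> Prop) -> Prop)
  (P : A -> B -> Prop) : Prop :=
  fwd_move kind win P /\ (kind = Bisim -> bwd_move win P).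

Fixpoint dup_wins_n (kind : game_kind) (n : nat) (P : A -> B -> Prop) : Prop :=
  match n with
  | 0 => True
  | S m => spoiler_moves kind (dup_wins_n kind m) P
  end.

CoInductive dup_wins_inf (kind : game_kind) (P : A -> B -> Prop) : Prop :=
  dup_wins_inf_intro : spoiler_moves kind (dup_wins_inf kind) P -> dup_wins_inf kind P.

Definition empty_map : A -> B -> Prop := fun _ _ => False.

Definition duplicator_wins (kind : game_kind) (rounds : option nat) : Prop :=
  match rounds with
  | None => dup_wins_inf kind empty_map
  | Some n => dup_wins_n kind n empty_map
  end.
End Game.

Definition clique_game {V : vocab} (kind : game_kind) (rounds : option nat)
  (k : option nat) (A B : structure V) : Prop :=
  duplicator_wins A B (clique_guarded A k) (clique_guarded B k) kind rounds.

Definition atom_game_C {V : vocab} (kind : game_kind) (rounds : option nat)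
  (k : option nat) (A B : structure V) : Prop :=
  duplicator_wins (Cstr A) (Cstr B) (atom_guarded (Cstr A) k) (atom_guarded (Cstr B) k)
    kind rounds.

(** In C(A) every clique of the Gaifman graph of A is the entry set of a
    C_n-tuple, and conversely every tuple of a relation of C(A) lists a clique
    of A (the Gaifman graph of C(A) is that of A).  Hence the atom guarded sets
    of C(A) are exactly the clique guarded sets of A, with the same width
    bound.  On clique guarded sets moreover the partial isomorphisms
    (homomorphisms) of A and B are exactly those of C(A) and C(B): the
    C_n-relations are automatically preserved, because both sides of such a
    map lie inside cliques.  So in every position Spoiler has the same moves
    and Duplicator the same answers in the two games, for any number of rounds,
    width bound and kind of game. *)
From Stdlib Require Import List Lia Classical.
Import ListNotations.

Lemma Forall2_In_r {S T : Type} (R : S -> T -> Prop) t u y :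
  Forall2 R t u -> In y u -> exists x, R x y.
Proof.
  induction 1 as [|x y' t u Hxy _ IH]; simpl; [tauto|].
  intros [<-|Hy]; eauto.
Qed.

Section GameCoinduction.
Context {V : vocab} (A B : structure V)
        (gA : (A -> Prop) -> Prop) (gB : (B -> Prop) -> Prop).

(* Transparent, so that the guard checker can look through it in the cofixpoint
   of [dup_wins_inf_coind]. *)
Lemma spoiler_moves_mono kind (w1 w2 : (A -> B -> Prop) -> Prop) :
  (forall Q, w1 Q -> w2 Q) ->
  forall P, spoiler_moves A B gA gB kind w1 P -> spoiler_moves A B gA gB kind w2 P.
Proof.
  intros Hw P [Hfwd Hbwd]; split.
  - intros X' HX'.
    destruct (Hfwd X' HX') as (Y' & P' & HY' & Hmap & Hagree & Hwin).
    exists Y', P'; auto.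
  - intros Hkind Y' HY'.
    destruct (Hbwd Hkind Y' HY') as (X' & P' & HX' & Hmap & Hagree & Hwin).
    exists X', P'; auto.
Defined.

Lemma dup_wins_inf_coind kind (R : (A -> B -> Prop) -> Prop) :
  (forall P, R P -> spoiler_moves A B gA gB kind R P) ->
  forall P, R P -> dup_wins_inf A B gA gB kind P.
Proof.
  intros Hinv. cofix CH. intros P HP. constructor.
  exact (spoiler_moves_mono kind R _ CH P (Hinv P HP)).
Qed.

Lemma dup_wins_inf_unfold kind P :
  dup_wins_inf A B gA gB kind P ->
  spoiler_moves A B gA gB kind (dup_wins_inf A B gA gB kind) P.
Proof. intros [H]; exact H. Qed.

End GameCoinduction.

Section CliqueStructure.
Context {V : vocab}.

Lemma clique_guarded_is_clique (A : structure V) k X t :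
  clique_guarded A k X -> (forall x, In x t -> X x) -> is_clique A t.
Proof.
  intros (a & _ & _ & Hclique & HXa) Ht x y Hx Hy.
  apply Hclique; apply HXa, Ht; assumption.
Qed.

Lemma clique_guarded_iff_atom_guarded_C (A : structure V) k X :
  inhabited A -> within k 1 ->
  clique_guarded A k X <-> atom_guarded (Cstr A) k X.
Proof.
  intros [x0] Hk1; split.
  - intros ([|y a] & Hlen & Hw & Hclique & HXa); [inversion Hlen|].
    exists (y :: a); repeat split; [assumption| |assumption].
    left; exists (inr (length a)), (y :: a); simpl; tauto.
  - intros ([|y a] & Hw & Hatom & HXa).
    + (* a nullary atom guards the empty set; so does any singleton clique *)
      exists [x0]; repeat split; [auto|assumption| |intros x Hx; destruct (HXa x Hx)].
      intros x y [<-|[]] [<-|[]]; auto.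
    + exists (y :: a); repeat split; [simpl; lia|assumption| |assumption].
      intros u v Hu Hv.
      destruct Hatom as [([s|n] & t & Hrel & Hsame) | (z & Hz)].
      * destruct (classic (u = v)) as [Heq|Hneq]; [left; exact Heq|].
        right; split; [exact Hneq|].
        exists s, t; rewrite <- !Hsame; auto.
      * apply (proj2 Hrel); apply Hsame; assumption.
      * left; destruct Hz as [Hz|Hz]; rewrite Hz in Hu, Hv; simpl in Hu, Hv;
          intuition congruence.
Qed.

Lemma rel_C_Forall2 (A B : structure V) k (P : A -> B -> Prop) (Y : B -> Prop) n t u :
  clique_guarded B k Y -> (forall x y, P x y -> Y y) ->
  Forall2 P t u -> rel (Cstr A) (inr n) t -> rel (Cstr B) (inr n) u.
Proof.
  intros HY HPY HPtu [Hlen _]; split.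
  - rewrite <- (Forall2_length HPtu); exact Hlen.
  - apply (clique_guarded_is_clique B k Y u HY); intros y Hy.
    destruct (Forall2_In_r P t u y HPtu Hy) as [x Hxy]; eauto.
Qed.

Section PartialMaps.
Context (A B : structure V) (k : option nat) (X : A -> Prop) (Y : B -> Prop)
        (HX : clique_guarded A k X) (HY : clique_guarded B k Y).

Lemma partial_iso_C P :
  partial_iso A B X Y P <-> partial_iso (Cstr A) (Cstr B) X Y P.
Proof.
  split; intros (Hfun & Hinj & Hdom & Hrng & Hrel);
    repeat (split; [assumption|]).
  - intros [s|n] t u HPtu; [exact (Hrel s t u HPtu)|split].
    + apply (rel_C_Forall2 A B k P Y); auto.
      intros x y Hxy; apply Hrng; eauto.
    + apply (rel_C_Forall2 B A k (fun y x => P x y) X); auto.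
      * intros y x Hxy; apply Hdom; eauto.
      * exact (Forall2_flip HPtu).
  - intros s; exact (Hrel (inl s)).
Qed.

Lemma partial_hom_C P :
  partial_hom A B X Y P <-> partial_hom (Cstr A) (Cstr B) X Y P.
Proof.
  split; intros (Hfun & Hdom & Hrng & Hrel);
    repeat (split; [assumption|]).
  - intros [s|n] t u HPtu; [exact (Hrel s t u HPtu)|].
    exact (rel_C_Forall2 A B k P Y n t u HY Hrng HPtu).
  - intros s; exact (Hrel (inl s)).
Qed.

Lemma partial_map_C kind P :
  partial_map A B kind X Y P <-> partial_map (Cstr A) (Cstr B) kind X Y P.
Proof. destruct kind; [apply partial_iso_C | apply partial_hom_C]. Qed.

End PartialMaps.

Section Games.
Context (A B : structure V) (k : option nat)
        (inhA : inhabited A) (inhB : inhabited B) (Hk1 : within k 1).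

Let guardA_iff := clique_guarded_iff_atom_guarded_C A k.
Let guardB_iff := clique_guarded_iff_atom_guarded_C B k.

Lemma spoiler_moves_C kind win P :
  spoiler_moves A B (clique_guarded A k) (clique_guarded B k) kind win P <->
  spoiler_moves (Cstr A) (Cstr B) (atom_guarded (Cstr A) k) (atom_guarded (Cstr B) k)
    kind win P.
Proof.
  unfold spoiler_moves, fwd_move, bwd_move.
  split; intros [Hfwd Hbwd]; split.
  - intros X' HX'; rewrite <- guardA_iff in HX' by assumption.
    destruct (Hfwd X' HX') as (Y' & P' & HY' & Hmap & Hrest).
    exists Y', P'; rewrite <- guardB_iff, <- partial_map_C by eassumption; auto.
  - intros Hkind Y' HY'; rewrite <- guardB_iff in HY' by assumption.
    destruct (Hbwd Hkind Y' HY') as (X' & P' & HX' & Hmap & Hrest).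
    exists X', P'; rewrite <- guardA_iff, <- (partial_iso_C A B k) by eassumption; auto.
  - intros X' HX'.
    destruct (Hfwd X' ltac:(apply guardA_iff; assumption)) as (Y' & P' & HY' & Hmap & Hrest).
    rewrite <- guardB_iff in HY' by assumption.
    exists Y', P'; rewrite partial_map_C by eassumption; auto.
  - intros Hkind Y' HY'.
    destruct (Hbwd Hkind Y' ltac:(apply guardB_iff; assumption)) as (X' & P' & HX' & Hmap & Hrest).
    rewrite <- guardA_iff in HX' by assumption.
    exists X', P'; rewrite (partial_iso_C A B k) by eassumption; auto.
Qed.

Lemma dup_wins_n_C kind n P :
  dup_wins_n A B (clique_guarded A k) (clique_guarded B k) kind n P <->
  dup_wins_n (Cstr A) (Cstr B) (atom_guarded (Cstr A) k) (atom_guarded (Cstr B) k) kind n P.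
Proof.
  revert P; induction n as [|n IH]; simpl; intros P; [tauto|].
  rewrite spoiler_moves_C; split; apply spoiler_moves_mono; intros Q; apply IH.
Qed.

Lemma dup_wins_inf_C kind P :
  dup_wins_inf A B (clique_guarded A k) (clique_guarded B k) kind P <->
  dup_wins_inf (Cstr A) (Cstr B) (atom_guarded (Cstr A) k) (atom_guarded (Cstr B) k) kind P.
Proof.
  split; apply dup_wins_inf_coind; intros Q HQ; apply dup_wins_inf_unfold in HQ.
  - apply spoiler_moves_C in HQ; exact HQ.
  - apply spoiler_moves_C; exact HQ.
Qed.

Lemma clique_game_iff_atom_game_C kind rounds :
  clique_game kind rounds k A B <-> atom_game_C kind rounds k A B.
Proof.
  destruct rounds as [n|]; [apply dup_wins_n_C | apply dup_wins_inf_C].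
Qed.

End Games.
End CliqueStructure.

Theorem proposition8p2 (V : vocab) (A B : structure V) :
  inhabited A -> inhabited B ->
  (clique_game Bisim None None A B <-> atom_game_C Bisim None None A B) /\
  (forall n : nat,
     clique_game Bisim (Some n) None A B <-> atom_game_C Bisim (Some n) None A B) /\
  (forall k : nat, 1 <= k ->
     clique_game Bisim None (Some k) A B <-> atom_game_C Bisim None (Some k) A B) /\
  (clique_game Sim None None A B <-> atom_game_C Sim None None A B).
Proof.
  intros inhA inhB.
  split; [|split; [|split]]; intros;
    apply clique_game_iff_atom_game_C; simpl; auto.
Qed.
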